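(* Let $\varepsilon>0$, let $\rho,\gamma$ be density matrices on a finite-dimensional system $A$ and $\rho',\gamma'$ density matrices on a finite-dimensional system $A'$. Then $$D_{\min}^\varepsilon\left(\rho\otimes\rho'\,\big\|\,\gamma\otimes\gamma'\right)\leq D_{\min}^\varepsilon(\rho\|\gamma)+D_{\max}(\rho'\|\gamma').$$
   Context: For density matrices $\rho,\gamma$ on a system $A$, the hypothesis testing divergence is $D_{\min}^\varepsilon(\rho\|\gamma)\coloneqq-\log\min\{\mathrm{Tr}[\gamma\Lambda]\,:\,0\le\Lambda\le I^A,\ \mathrm{Tr}[\Lambda\rho]\ge1-\varepsilon\}$, and the max relative entropy is $D_{\max}(\rho\|\gamma)\coloneqq\log\min\{t\ge0: t\gamma\ge\rho\}$ (equal to $+\infty$ if no such $t$ exists). Logarithms are base 2. *)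

From HB Require Import structures.
From mathcomp Require Import all_boot all_order all_algebra.
From mathcomp Require Import all_classical all_reals.
From mathcomp Require Import exp.
From mathcomp.real_closed Require Import complex mxtens.

Set Implicit Arguments.
Unset Strict Implicit.
Unset Printing Implicit Defensive.

Import Order.TTheory GRing.Theory Num.Theory.
Local Open Scope ring_scope.
Local Open Scope classical_set_scope.

Section QInfo.
Variable R : realType.
Local Notation C := (R[i]).

Definition adjmx {m n : nat} (A : 'M[C]_(m, n)) : 'M[C]_(n, m) :=
  map_mx (@conjc R) A^T.

(* Positive semidefinite: Hermitian and <v, A v> >= 0 for all v
   (0 <= z in R[i] means z is a nonnegative real). *)
Definition psd {n : nat} (A : 'M[C]_n) : Prop :=
  adjmx A = A /\ forall v : 'cV[C]_n, 0 <= (adjmx v *m A *m v) 0 0.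

Definition loewner_le {n : nat} (A B : 'M[C]_n) : Prop := psd (B - A).

Definition density {n : nat} (rho : 'M[C]_n) : Prop :=
  psd rho /\ \tr rho = 1.

Definition elog2 (x : R) : \bar R :=
  if x <= 0 then -oo%E else (ln x / ln 2)%:E.

(* Hypothesis testing divergence:
   - log2 min { Tr[gamma L] : 0 <= L <= I, Tr[L rho] >= 1 - eps }.
   Traces of products of PSD matrices are real; we take real parts. *)
Definition Dmin_set {n : nat} (eps : R) (rho gamma : 'M[C]_n) : set R :=
  [set x | exists L : 'M[C]_n,
     [/\ loewner_le 0 L, loewner_le L 1%:M,
         1 - eps <= complex.Re (\tr (L *m rho)) &
         x = complex.Re (\tr (gamma *m L))]].

Definition Dmin {n : nat} (eps : R) (rho gamma : 'M[C]_n) : \bar R :=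
  (- elog2 (inf (Dmin_set eps rho gamma)))%E.

Definition Dmax_set {n : nat} (rho gamma : 'M[C]_n) : set R :=
  [set t | 0 <= t /\ loewner_le rho ((t%:C)%C *: gamma)].

Definition Dmax {n : nat} (rho gamma : 'M[C]_n) : \bar R :=
  if pselect (Dmax_set rho gamma !=set0)
  then elog2 (inf (Dmax_set rho gamma))
  else +oo%E.

End QInfo.

(** Let [a] and [b] be the optimal type-II errors of the tests of [rho]
    against [gamma] and of [rho *t rho'] against [gamma *t gamma'], and let
    [rho' <= t gamma'].  For a feasible test [L] on the product system, the
    partial trace [Tr_2 [L (1 *t rho')]] is a feasible test for [rho] against
    [gamma], so [a <= Tr [(gamma *t rho') L] <= t Tr [(gamma *t gamma') L]],
    the last step because [gamma *t (t gamma' - rho')] is positive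
    semidefinite.  Taking infima gives [a <= inf t * b], and [-log2] turns this
    into the claim. *)

From mathcomp Require Import all_boot all_order all_algebra.
From mathcomp Require Import all_classical all_reals exp.
From mathcomp Require Import spectral.
From mathcomp.real_closed Require Import complex mxtens.
From mathcomp Require Import lra.

Set Implicit Arguments.
Unset Strict Implicit.
Unset Printing Implicit Defensive.

Import Order.TTheory GRing.Theory Num.Theory.
Local Open Scope ring_scope.

Section PartialTrace.
Variable R : comPzRingType.

Lemma big_mxtens_index m n (F : 'I_(m * n) -> R) :
  \sum_(k < m * n) F k = \sum_(i < m) \sum_(j < n) F (mxtens_index (i, j)).
Proof.
rewrite pair_big /= (reindex (@mxtens_index m n)) /=.
  by apply: eq_bigr => -[].
by exists (@mxtens_unindex m n) => k _; rewrite (mxtens_indexK, mxtens_unindexK).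
Qed.

Lemma mxtrace_tens m n (A : 'M[R]_m) (B : 'M[R]_n) :
  \tr (A *t B) = \tr A * \tr B.
Proof.
rewrite /mxtrace big_mxtens_index mulr_suml; apply: eq_bigr => i _.
by rewrite mulr_sumr; apply: eq_bigr => j _; rewrite tensmxE.
Qed.

Lemma mxtrace11 (A : 'M[R]_1) : \tr A = A 0 0.
Proof. by rewrite /mxtrace big_ord1. Qed.

Lemma tensmxBr m n p q (A : 'M[R]_(m, n)) (B D : 'M[R]_(p, q)) :
  A *t (B - D) = A *t B - A *t D.
Proof. by apply/matrixP => i j; rewrite !mxE mulrBr. Qed.

Lemma tensmxZr m n p q (A : 'M[R]_(m, n)) (B : 'M[R]_(p, q)) (c : R) :
  A *t (c *: B) = c *: (A *t B).
Proof. by apply/matrixP => i j; rewrite !mxE mulrCA. Qed.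

(* [ptrace L s] is the partial trace [Tr_2 [L (1 *t s)]]. *)
Definition ptrace m n (L : 'M[R]_(m * n)) (s : 'M[R]_n) : 'M[R]_m :=
  \matrix_(i, j) \sum_(k < n) \sum_(l < n)
     L (mxtens_index (i, k)) (mxtens_index (j, l)) * s l k.

Lemma mxtrace_mul_ptrace m n (L : 'M[R]_(m * n)) s (P : 'M[R]_m) :
  \tr (P *m ptrace L s) = \tr ((P *t s) *m L).
Proof.
rewrite /mxtrace big_mxtens_index; apply: eq_bigr => i _.
rewrite mxE; under eq_bigr do rewrite mxE mulr_sumr.
under [RHS]eq_bigr do rewrite mxE big_mxtens_index.
rewrite [RHS]exchange_big /=; apply: eq_bigr => j _.
rewrite [RHS]exchange_big /=; apply: eq_bigr => k _.
rewrite mulr_sumr; apply: eq_bigr => l _.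
by rewrite tensmxE -mulrA [s l k * _]mulrC.
Qed.

Lemma ptraceB m n (L1 L2 : 'M[R]_(m * n)) s :
  ptrace (L1 - L2) s = ptrace L1 s - ptrace L2 s.
Proof.
apply/matrixP => i j; rewrite !mxE -sumrB; apply: eq_bigr => k _.
by rewrite -sumrB; apply: eq_bigr => l _; rewrite !mxE mulrBl.
Qed.

Lemma ptrace1 m n (s : 'M[R]_n) :
  ptrace (1%:M : 'M[R]_(m * n)) s = (\tr s)%:M.
Proof.
apply/matrixP => i j; rewrite !mxE /mxtrace -mulr_natr mulr_suml.
apply: eq_bigr => k _.
transitivity ((1%:M *m s) k k * (i == j)%:R); last by rewrite mul1mx.
rewrite mxE mulr_suml; apply: eq_bigr => l _.
by rewrite !mxE (can_eq (@mxtens_indexK m n)) xpair_eqE mulrAC -natrM mulnb andbC.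
Qed.

End PartialTrace.

Section Positivity.
Variable R : realType.
Local Notation C := R[i].

Lemma Re_ge0 (z : C) : 0 <= z -> 0 <= complex.Re z.
Proof. by rewrite lecE => /andP[]. Qed.

Lemma ReB (u w : C) : complex.Re (u - w) = complex.Re u - complex.Re w.
Proof. by case: u w => [a b] [c d]. Qed.

Lemma ReMl (t : R) (z : C) : complex.Re ((t%:C)%C * z) = t * complex.Re z.
Proof. by case: z => a b /=; rewrite mul0r subr0. Qed.

Lemma adjmxK m n (A : 'M[C]_(m, n)) : adjmx (adjmx A) = A.
Proof. exact: trmxCK. Qed.

Lemma adjmxM m n p (A : 'M[C]_(m, n)) (B : 'M[C]_(n, p)) :
  adjmx (A *m B) = adjmx B *m adjmx A.
Proof. by rewrite /adjmx trmx_mul map_mxM. Qed.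

Lemma adjmx_tens m n p q (A : 'M[C]_(m, n)) (B : 'M[C]_(p, q)) :
  adjmx (A *t B) = adjmx A *t adjmx B.
Proof. by rewrite /adjmx trmx_tens map_mxT. Qed.

Lemma adjmx0 n : adjmx (0 : 'M[C]_n) = 0.
Proof. by rewrite /adjmx trmx0 map_mx0. Qed.

Lemma adjmx1 n : adjmx (1%:M : 'M[C]_n) = 1%:M.
Proof. by rewrite /adjmx trmx1 map_mx1. Qed.

Lemma adjmx_ptrace m n (L : 'M[C]_(m * n)) (s : 'M[C]_n) :
  adjmx (ptrace L s) = ptrace (adjmx L) (adjmx s).
Proof.
apply/matrixP => i j; rewrite !mxE rmorph_sum /= exchange_big /=.
apply: eq_bigr => l _; rewrite rmorph_sum /=; apply: eq_bigr => k _.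
by rewrite rmorphM !mxE.
Qed.

Lemma psd0 n : psd (0 : 'M[C]_n).
Proof. by split; [exact: adjmx0 | move=> v; rewrite mulmx0 mul0mx mxE]. Qed.

Lemma psd_gram m n (M : 'M[C]_(m, n)) : psd (M *m adjmx M).
Proof.
split; first by rewrite adjmxM adjmxK.
move=> v; set w := adjmx M *m v.
have -> : adjmx v *m (M *m adjmx M) *m v = adjmx w *m w.
  by rewrite adjmxM adjmxK !mulmxA.
by rewrite mxE; apply: sumr_ge0 => a _; rewrite !mxE mulrC mul_conjC_ge0.
Qed.

Lemma psd1 n : psd (1%:M : 'M[C]_n).
Proof. by rewrite -[X in psd X]mul1mx -{2}adjmx1; exact: psd_gram. Qed.

Lemma loewner_le_refl n (A : 'M[C]_n) : loewner_le A A.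
Proof. by rewrite /loewner_le subrr; exact: psd0. Qed.

Lemma psd_factor n (A : 'M[C]_n) :
  psd A -> exists M : 'M[C]_n, A = M *m adjmx M.
Proof.
move=> [hA hpos]; set P := spectralmx A; set d := spectral_diag A.
have PP : P *m adjmx P = 1%:M := unitarymxP (spectral_unitarymx A).
have eA : A = adjmx P *m diag_mx d *m P.
  have <- : invmx P = adjmx P := invmx_unitary (spectral_unitarymx A).
  by apply/orthomx_spectralP/normalmxP; move: hA; rewrite /adjmx => ->.
have d_ge0 k : 0 <= d 0 k.
  have := hpos (adjmx (row k P)); rewrite adjmxK.
  have -> : (row k P *m A *m adjmx (row k P)) 0 0 = (P *m A *m adjmx P) k k.
    rewrite !mxE; apply: eq_bigr => b _; rewrite !mxE; congr (_ * _).
    by apply: eq_bigr => a _; rewrite !mxE.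
  by rewrite eA !mulmxA PP mul1mx -!mulmxA PP mulmx1 mxE eqxx mulr1n.
set D := diag_mx (map_mx sqrtC d).
have DD : D *m adjmx D = diag_mx d.
  rewrite /adjmx tr_diag_mx map_diag_mx mulmx_diag; congr diag_mx.
  apply/rowP => k; rewrite !mxE.
  change (sqrtC (d 0 k) * (sqrtC (d 0 k))^* = d 0 k).
  by rewrite geC0_conj ?sqrtC_ge0 ?d_ge0 // -expr2 sqrtCK.
exists (adjmx P *m D).
by rewrite adjmxM adjmxK -mulmxA [X in _ *m X]mulmxA DD mulmxA -eA.
Qed.

Lemma mxtrace_psd_mul_ge0 n (A X : 'M[C]_n) :
  psd A -> psd X -> 0 <= \tr (A *m X).
Proof.
move=> /psd_factor[M ->] [_ hX]; rewrite -mulmxA mxtrace_mulC.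
apply: sumr_ge0 => j _.
have -> : (adjmx M *m X *m M) j j = (adjmx (col j M) *m X *m col j M) 0 0.
  rewrite !mxE; apply: eq_bigr => b _; rewrite !mxE; congr (_ * _).
  by apply: eq_bigr => a _; rewrite !mxE.
exact: hX.
Qed.

Lemma mxtrace_psd_ge0 n (X : 'M[C]_n) : psd X -> 0 <= \tr X.
Proof. by move=> hX; have := mxtrace_psd_mul_ge0 (psd1 n) hX; rewrite mul1mx. Qed.

Lemma psd_tens m n (A : 'M[C]_m) (B : 'M[C]_n) : psd A -> psd B -> psd (A *t B).
Proof.
move=> /psd_factor[M ->] /psd_factor[N ->].
by rewrite -tensmx_mul -adjmx_tens; exact: psd_gram.
Qed.

Lemma ptrace_psd m n (L : 'M[C]_(m * n)) (s : 'M[C]_n) :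
  psd L -> psd s -> psd (ptrace L s).
Proof.
move=> [hL hL_ge0] [hs hs_ge0]; split; first by rewrite adjmx_ptrace hL hs.
move=> v; rewrite -mxtrace11 mxtrace_mulC mulmxA mxtrace_mul_ptrace.
exact: mxtrace_psd_mul_ge0 (psd_tens (psd_gram v) (conj hs hs_ge0)) (conj hL hL_ge0).
Qed.

End Positivity.

Local Open Scope classical_set_scope.

Section Divergences.
Variable R : realType.
Local Notation C := R[i].

Lemma Dmin_set_ge0 n eps (rho gamma : 'M[C]_n) :
  psd gamma -> lbound (Dmin_set eps rho gamma) 0.
Proof.
move=> hg _ [L [hL _ _ ->]]; apply/Re_ge0/mxtrace_psd_mul_ge0 => //.
by rewrite /loewner_le subr0 in hL.
Qed.

Lemma Dmin_set_neq0 n eps (rho gamma : 'M[C]_n) :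
  0 <= eps -> \tr rho = 1 -> Dmin_set eps rho gamma !=set0.
Proof.
move=> eps_ge0 tr_rho; exists (complex.Re (\tr (gamma *m 1%:M))), 1%:M; split=> //.
- by rewrite /loewner_le subr0; exact: psd1.
- exact: loewner_le_refl.
- by rewrite mul1mx tr_rho /= lerBlDr lerDl.
Qed.

Lemma Dmax_set_ge1 n (rho gamma : 'M[C]_n) t :
  \tr rho = 1 -> \tr gamma = 1 -> Dmax_set rho gamma t -> 1 <= t.
Proof.
move=> tr_rho tr_gamma [_ /mxtrace_psd_ge0/Re_ge0].
by rewrite raddfB /= mxtraceZ tr_gamma tr_rho mulr1 ReB /= subr_ge0.
Qed.

Lemma Dmin_set_ptrace n n' eps (rho gamma : 'M[C]_n) (rho' : 'M[C]_n')
    (L : 'M[C]_(n * n')) :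
  density rho' -> loewner_le 0 L -> loewner_le L 1%:M ->
  1 - eps <= complex.Re (\tr (L *m (rho *t rho'))) ->
  Dmin_set eps rho gamma (complex.Re (\tr ((gamma *t rho') *m L))).
Proof.
move=> [hr' tr_rho'] hL0 hL1 htr; exists (ptrace L rho'); split.
- by move: hL0; rewrite /loewner_le !subr0 => /ptrace_psd; apply.
- have -> : 1%:M = ptrace 1%:M rho' :> 'M[C]_n by rewrite ptrace1 tr_rho'.
  by rewrite /loewner_le -ptraceB; exact: ptrace_psd.
- by rewrite mxtrace_mulC mxtrace_mul_ptrace mxtrace_mulC.
- by rewrite mxtrace_mul_ptrace.
Qed.

Lemma Dmax_set_mxtrace_tens n n' (gamma : 'M[C]_n) (rho' gamma' : 'M[C]_n')
    (L : 'M[C]_(n * n')) t :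
  Dmax_set rho' gamma' t -> psd gamma -> psd L ->
  complex.Re (\tr ((gamma *t rho') *m L))
    <= t * complex.Re (\tr ((gamma *t gamma') *m L)).
Proof.
move=> [_ hle] hg hL; rewrite -subr_ge0 -ReMl -ReB.
have := mxtrace_psd_mul_ge0 (psd_tens hg hle) hL.
by rewrite tensmxBr tensmxZr mulmxBl -scalemxAl raddfB /= mxtraceZ => /Re_ge0.
Qed.

Lemma Dmin_set_tens_le n n' eps (rho gamma : 'M[C]_n) (rho' gamma' : 'M[C]_n')
    t x :
  density rho' -> psd gamma -> Dmax_set rho' gamma' t ->
  Dmin_set eps (rho *t rho') (gamma *t gamma') x ->
  inf (Dmin_set eps rho gamma) <= t * x.
Proof.
move=> hrho' hg hT [L [hL0 hL1 htr ->]].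
have hL : psd L by move: hL0; rewrite /loewner_le subr0.
apply: le_trans (Dmax_set_mxtrace_tens hT hg hL).
apply: ge_inf; first by exists 0; exact: Dmin_set_ge0.
exact: Dmin_set_ptrace.
Qed.

End Divergences.

Lemma le_mul_inf (R : realType) (A B : set R) (a : R) :
  A !=set0 -> B !=set0 -> lbound A 0 -> lbound B 0 ->
  (forall x y, A x -> B y -> a <= x * y) -> a <= inf A * inf B.
Proof.
move=> [x0 Ax0] [y0 By0] A_ge0 B_ge0 le_a.
have [a_le0|a_gt0] := leP a 0.
  apply: le_trans a_le0 (mulr_ge0 _ _); apply: lb_le_inf => //.
  - by exists x0.
  - by exists y0.
have B_gt0 y : B y -> 0 < y.
  move=> By; rewrite ltNge; apply/negP => y_le0.
  have := lt_le_trans a_gt0 (le_a _ _ Ax0 By).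
  by rewrite ltNge mulr_ge0_le0 ?A_ge0.
have le_infA y : B y -> a / y <= inf A.
  move=> By; apply: lb_le_inf; first by exists x0.
  by move=> x Ax; rewrite ler_pdivrMr ?B_gt0 // le_a.
have infA_gt0 : 0 < inf A.
  exact: lt_le_trans (divr_gt0 a_gt0 (B_gt0 _ By0)) (le_infA _ By0).
rewrite mulrC -ler_pdivrMr //; apply: lb_le_inf; first by exists y0.
by move=> y By; rewrite ler_pdivrMr // mulrC -ler_pdivrMr ?B_gt0 ?le_infA.
Qed.

Lemma elog2_le_add (R : realType) (a t b : R) :
  0 < t -> a <= t * b -> (- elog2 b <= - elog2 a + elog2 t)%E.
Proof.
move=> t_gt0 le_ab; rewrite /elog2 (leNgt t) t_gt0 /=.
have [a_le0|a_gt0] := leP a 0; first by rewrite /= addye // leey.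
have b_gt0 : 0 < b by rewrite -(pmulr_rgt0 _ t_gt0) (lt_le_trans a_gt0 le_ab).
rewrite (leNgt b) b_gt0 /= -EFinD lee_fin.
have ln2_gt0 : 0 < ln (2 : R) by apply: ln_gt0; rewrite ltr1n.
have : ln a / ln 2 <= (ln t + ln b) / ln 2.
  rewrite ler_pM2r ?invr_gt0 // -lnM ?posrE ?ler_ln ?posrE ?mulr_gt0 //.
rewrite mulrDl; lra.
Qed.

Theorem lemma3 (R : realType) (n n' : nat) (eps : R) (heps : 0 < eps)
  (rho gamma : 'M[R[i]]_n) (rho' gamma' : 'M[R[i]]_n')
  (hrho : density rho) (hgamma : density gamma)
  (hrho' : density rho') (hgamma' : density gamma') :
  (Dmin eps (tensmx rho rho') (tensmx gamma gamma')
     <= Dmin eps rho gamma + Dmax rho' gamma')%E.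
Proof.
move: hrho hgamma hgamma' => [_ tr_rho] [hg _] [hg' tr_gamma'].
have [_ tr_rho'] := hrho'.
rewrite /Dmax; case: pselect => [Tne|?] /=; last first.
  by rewrite addey ?leey // /Dmin /elog2; case: ifP.
have T_ge1 : lbound (Dmax_set rho' gamma') 1 by move=> t; exact: Dmax_set_ge1.
have tau_ge1 : 1 <= inf (Dmax_set rho' gamma') := lb_le_inf Tne T_ge1.
apply: elog2_le_add; first exact: lt_le_trans ltr01 tau_ge1.
apply: le_mul_inf.
- exact: Tne.
- by apply: Dmin_set_neq0; rewrite ?ltW // mxtrace_tens tr_rho tr_rho' mulr1.
- by move=> t /T_ge1; apply: le_trans.
- exact: Dmin_set_ge0 (psd_tens hg hg').
- by move=> t x Tt; exact: Dmin_set_tens_le.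
Qed.
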